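(* Let $T:X\to Y$ be a linear operator between Archimedean vector lattices. Then $T$ satisfies condition $(\beta)$ if and only if $T$ satisfies condition $(\beta_0)$.
   Context: All vector lattices are Archimedean. For a subset $A$ of a vector lattice $X$, $A^d=\{x\in X: |x|\wedge|a|=0 \text{ for all } a\in A\}$ and $A^{dd}=(A^d)^d$. For $a,b\in X$ we write $a\lhd b$ if $\{a\}^{dd}\subseteq\{b\}^{dd}$; $a$ and $b$ are of the same width if $\{a\}^{dd}=\{b\}^{dd}$. A linear operator $T$ satisfies condition $(\beta)$ if $Ta\lhd Tb$ whenever $a\lhd b$. It satisfies condition $(\beta_0)$ if whenever $a,b\in X$ are of the same width, $Ta$ and $Tb$ are of the same width in $Y$. *)

From HB Require Import structures.
From mathcomp Require Import all_boot all_order all_algebra.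
From mathcomp Require Import reals.
Set Implicit Arguments. Unset Strict Implicit. Unset Printing Implicit Defensive.
Import Order.TTheory GRing.Theory Num.Theory.
Local Open Scope ring_scope.

Record vlattice (R : realType) (X : lmodType R) := VLattice {
  vle : X -> X -> Prop;
  vjoin : X -> X -> X;
  vle_refl : forall x, vle x x;
  vle_anti : forall x y, vle x y -> vle y x -> x = y;
  vle_trans : forall x y z, vle x y -> vle y z -> vle x z;
  vle_add : forall x y z, vle x y -> vle (x + z) (y + z);
  vle_scale : forall (c : R) x y, 0 <= c -> vle x y -> vle (c *: x) (c *: y);
  vjoin_ubl : forall x y, vle x (vjoin x y);
  vjoin_ubr : forall x y, vle y (vjoin x y);
  vjoin_lub : forall x y z, vle x z -> vle y z -> vle (vjoin x y) z
}.

Section VL.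
Variables (R : realType) (X : lmodType R) (L : vlattice X).

Definition vmeet (x y : X) : X := - vjoin L (- x) (- y).
Definition vabs (x : X) : X := vjoin L x (- x).

Definition archimedean : Prop :=
  forall x y : X, vle L 0 x -> (forall n : nat, vle L (x *+ n) y) -> x = 0.

Definition disj (A : X -> Prop) : X -> Prop :=
  fun x => forall a, A a -> vmeet (vabs x) (vabs a) = 0.

Definition band_dd (a : X) : X -> Prop := disj (disj (fun x => x = a)).

Definition lhd (a b : X) : Prop := forall x, band_dd a x -> band_dd b x.

Definition same_width (a b : X) : Prop := band_dd a = band_dd b.
End VL.

Definition cond_beta (R : realType) (X Y : lmodType R)
  (LX : vlattice X) (LY : vlattice Y) (T : X -> Y) : Prop :=
  forall a b : X, lhd LX a b -> lhd LY (T a) (T b).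

Definition cond_beta0 (R : realType) (X Y : lmodType R)
  (LX : vlattice X) (LY : vlattice Y) (T : X -> Y) : Prop :=
  forall a b : X, same_width LX a b -> same_width LY (T a) (T b).

(* The band {b}^dd only sees the disjointness pattern of |b|, and a nonnegative
   p in {b}^dd does not change it: p + |b| and b have the same width.  For a in
   {b}^dd both a + |a| and |a| are such p, so under (beta_0) T maps
   a + |a| + |b| and |a| + |b| into {Tb}^dd, hence so is their difference Ta.
   The converse is immediate, and neither direction uses the Archimedean
   hypotheses. *)
From HB Require Import structures.
From mathcomp Require Import all_boot all_order all_algebra.
From mathcomp Require Import reals.
From Stdlib Require Import FunctionalExtensionality PropExtensionality.
Set Implicit Arguments. Unset Strict Implicit. Unset Printing Implicit Defensive.
Import Order.TTheory GRing.Theory Num.Theory.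
Local Open Scope ring_scope.

Section VectorLattice.
Variables (R : realType) (X : lmodType R) (L : vlattice X).
Local Notation le := (vle L).
Local Notation join := (vjoin L).
Local Notation meet := (@vmeet R X L).
Local Notation abs := (@vabs R X L).

Lemma vle_add2r x y z : le (x + z) (y + z) -> le x y.
Proof. by move=> /(vle_add (- z)); rewrite !addrK. Qed.

Lemma vle_opp x y : le x y -> le (- y) (- x).
Proof.
move=> /(vle_add (- x - y)).
by rewrite addrA subrr add0r [y + _]addrC addrNK.
Qed.

Lemma vle_add2 a b c d : le a b -> le c d -> le (a + c) (b + d).
Proof.
move=> hab hcd; apply: vle_trans (vle_add c hab) _.
by rewrite ![b + _]addrC; apply: vle_add.
Qed.

Lemma vjoinC x y : join x y = join y x.
Proof. by apply: vle_anti; apply: vjoin_lub; apply: vjoin_ubr || apply: vjoin_ubl. Qed.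

Lemma vmeet_lel x y : le (meet x y) x.
Proof. by rewrite /vmeet -{2}(opprK x); apply/vle_opp/vjoin_ubl. Qed.

Lemma vmeet_ler x y : le (meet x y) y.
Proof. by rewrite /vmeet -{2}(opprK y); apply/vle_opp/vjoin_ubr. Qed.

Lemma vmeet_glb x y z : le z x -> le z y -> le z (meet x y).
Proof.
move=> hx hy; rewrite /vmeet -(opprK z).
by apply/vle_opp/vjoin_lub; apply: vle_opp.
Qed.

Lemma vmeetC x y : meet x y = meet y x.
Proof. by rewrite /vmeet vjoinC. Qed.

Lemma vmeetDr x y z : meet (x + z) (y + z) = meet x y + z.
Proof.
apply: vle_anti; last by apply: vmeet_glb; apply: vle_add;
  [exact: vmeet_lel | exact: vmeet_ler].
apply: (@vle_add2r _ _ (- z)); rewrite addrK.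
by apply: vmeet_glb; apply: (@vle_add2r _ _ z); rewrite addrNK;
  [exact: vmeet_lel | exact: vmeet_ler].
Qed.

Lemma vmeetSl u u' w : le u u' -> le (meet u w) (meet u' w).
Proof.
by move=> hu; apply: vmeet_glb; [exact: vle_trans (vmeet_lel _ _) hu | exact: vmeet_ler].
Qed.

Lemma vabs_ge0 x : le 0 (abs x).
Proof.
have h2 : le 0 (abs x + abs x).
  by rewrite -(subrr x); apply: vle_add2; [exact: vjoin_ubl | exact: vjoin_ubr].
have half_ge0 : 0 <= (2 : R)^-1 by rewrite invr_ge0 ler0n.
have := vle_scale half_ge0 h2.
by rewrite scaler0 -mulr2n -scaler_nat scalerA mulVf ?scale1r ?pnatr_eq0.
Qed.

Lemma vabsN x : abs (- x) = abs x.
Proof. by rewrite /vabs opprK vjoinC. Qed.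

Lemma vabs_id p : le 0 p -> abs p = p.
Proof.
move=> hp; apply: vle_anti; last exact: vjoin_ubl.
apply: vjoin_lub; first exact: vle_refl.
have hNp : le (- p) 0 by rewrite -[X in le _ X]oppr0; apply: vle_opp.
exact: vle_trans hNp hp.
Qed.

Lemma vabsD_le x y : le (abs (x + y)) (abs x + abs y).
Proof.
apply: vjoin_lub; first by apply: vle_add2; apply: vjoin_ubl.
by rewrite opprD; apply: vle_add2; apply: vjoin_ubr.
Qed.

Lemma vaddr_abs_ge0 x : le 0 (x + abs x).
Proof. by have := vle_add x (vjoin_ubr L x (- x)); rewrite addNr addrC. Qed.

Lemma vmeetD_le u v w : le 0 u -> le 0 v -> le 0 w ->
  le (meet (u + v) w) (meet u w + meet v w).
Proof.
move=> hu hv hw; rewrite -vmeetDr.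
have le_addr_ge0 x y : le 0 y -> le x (x + y).
  by move=> hy; rewrite -{1}[x]addr0; apply: vle_add2 (vle_refl _ _) hy.
have mw := vle_trans (vmeet_ler (u + v) w).
apply: vmeet_glb; last by apply/mw/le_addr_ge0/vmeet_glb.
apply: (@vle_add2r _ _ (- u)); rewrite [u + meet v w]addrC addrK.
apply: vmeet_glb; apply: (@vle_add2r _ _ u); rewrite addrNK.
  by rewrite [v + u]addrC; apply: vmeet_lel.
by apply/mw/le_addr_ge0.
Qed.

Definition vdisjoint x y := meet (abs x) (abs y) = 0.

Lemma vdisjointC x y : vdisjoint x y -> vdisjoint y x.
Proof. by rewrite /vdisjoint vmeetC. Qed.

Lemma vdisjointDl x y a : vdisjoint x a -> vdisjoint y a -> vdisjoint (x + y) a.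
Proof.
move=> hx hy; apply: vle_anti; last by apply: vmeet_glb; apply: vabs_ge0.
apply: vle_trans (vmeetSl _ (vabsD_le x y)) _.
apply: vle_trans (vmeetD_le (vabs_ge0 x) (vabs_ge0 y) (vabs_ge0 a)) _.
by rewrite hx hy addr0; apply: vle_refl.
Qed.

Lemma vdisjointBl x y a : vdisjoint x a -> vdisjoint y a -> vdisjoint (x - y) a.
Proof. by move=> hx hy; apply: vdisjointDl hx _; rewrite /vdisjoint vabsN. Qed.

Lemma vdisjoint_absl x a : vdisjoint (abs x) a <-> vdisjoint x a.
Proof. by rewrite /vdisjoint vabs_id //; apply: vabs_ge0. Qed.

Lemma vdisjoint_le y u v : le (abs u) (abs v) -> vdisjoint y v -> vdisjoint y u.
Proof.
move=> huv hyv; apply: vle_anti; last by apply: vmeet_glb; apply: vabs_ge0.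
by rewrite -hyv vmeetC [meet (abs y) _]vmeetC; apply: vmeetSl.
Qed.

Lemma band_ddP a x : band_dd L a x <-> (forall y, vdisjoint y a -> vdisjoint x y).
Proof.
split=> h y hy; apply: h; first by move=> _ ->.
exact: hy.
Qed.

Lemma band_dd_refl a : band_dd L a a.
Proof. by apply/band_ddP => y; apply: vdisjointC. Qed.

Lemma band_ddD a x y : band_dd L a x -> band_dd L a y -> band_dd L a (x + y).
Proof.
move=> /band_ddP hx /band_ddP hy; apply/band_ddP => z hz.
by apply: vdisjointDl; [exact: hx | exact: hy].
Qed.

Lemma band_ddB a x y : band_dd L a x -> band_dd L a y -> band_dd L a (x - y).
Proof.
move=> /band_ddP hx /band_ddP hy; apply/band_ddP => z hz.
by apply: vdisjointBl; [exact: hx | exact: hy].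
Qed.

Lemma band_dd_abs a x : band_dd L a x -> band_dd L a (abs x).
Proof. by move=> /band_ddP hx; apply/band_ddP => y /hx /vdisjoint_absl. Qed.

Lemma lhdE a b : lhd L a b <-> band_dd L b a.
Proof.
split=> [|/band_ddP hab x /band_ddP hx]; first by apply; apply: band_dd_refl.
by apply/band_ddP => y /hab /vdisjointC /hx.
Qed.

Lemma same_widthE a b : same_width L a b <-> lhd L a b /\ lhd L b a.
Proof.
split=> [hw | [hab hba]]; first by split=> x; rewrite hw.
apply: functional_extensionality => x.
by apply: propositional_extensionality; split; [apply: hab | apply: hba].
Qed.

Lemma same_width_band x b : same_width L x b -> band_dd L b x.
Proof. by move=> <-; apply: band_dd_refl. Qed.

Lemma same_width_addr_abs p b :
  le 0 p -> band_dd L b p -> same_width L (p + abs b) b.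
Proof.
move=> hp /band_ddP hpb.
have hsum_ge0 : le 0 (p + abs b) by rewrite -(addr0 0); apply: vle_add2 hp (vabs_ge0 b).
have disj_eq : forall y, vdisjoint y (p + abs b) <-> vdisjoint y b.
  move=> y; split => [hy | hy].
    apply: vdisjoint_le hy; rewrite (vabs_id hsum_ge0).
    by rewrite -{1}[abs b]add0r; apply: vle_add2 hp (vle_refl _ _).
  apply: vdisjointC; apply: vdisjointDl; first exact: hpb.
  by apply/vdisjoint_absl/vdisjointC.
rewrite /same_width /band_dd; congr (disj L _).
apply: functional_extensionality => y; apply: propositional_extensionality.
by split=> h _ ->; apply/disj_eq/h.
Qed.

End VectorLattice.

Theorem theorem4p2 (R : realType) (X Y : lmodType R)
  (LX : vlattice X) (LY : vlattice Y)
  (HX : archimedean LX) (HY : archimedean LY)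
  (T : {linear X -> Y}) :
  cond_beta LX LY T <-> cond_beta0 LX LY T.
Proof.
split=> [hbeta a b /same_widthE [hab hba] | hbeta0 a b /lhdE hab].
  by apply/same_widthE; split; apply: hbeta.
have wide_band p : vle LX 0 p -> band_dd LX b p ->
    band_dd LY (T b) (T (p + vabs LX b)).
  by move=> hp hpb; apply/same_width_band/hbeta0/same_width_addr_abs.
have habs := band_dd_abs hab.
have hpos := wide_band _ (vaddr_abs_ge0 LX a) (band_ddD hab habs).
have habs' := wide_band _ (vabs_ge0 LX a) habs.
apply/lhdE; have := band_ddB hpos habs'.
by rewrite -linearB /= -[a + _ + _]addrA addrK.
Qed.
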